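(* For all integers $n\ge 2$ and $1\le k<n$, the vertex covering number of $G=H_B(n,k)$ is $\beta(G)=\binom{n}{k}$.
   Context: Fix integers $n\ge 2$ and $1\le k<n$ and positive real numbers $x_1<x_2<\dots<x_n$. Let $\mathscr{B}_n=\{\pm x_1,\pm x_2,\dots,\pm x_{n-1},x_n\}$ (so $-x_n\notin\mathscr{B}_n$). Let $\phi(\mathscr{B}_n)$ be the family of all nonempty subsets $S\subseteq\mathscr{B}_n$ whose elements have pairwise distinct absolute values and whose element of largest absolute value is positive. Let $\mathscr{B}_n^+=\{x_1,\dots,x_n\}$, let $V_1$ be the set of all $k$-element subsets of $\mathscr{B}_n^+$, and let $V_2=\phi(\mathscr{B}_n)\setminus V_1$. For $A\in\phi(\mathscr{B}_n)$ put $A^\dagger=\{|a|:a\in A\}$. The bipartite Kneser B type-$k$ graph $H_B(n,k)$ is the simple graph with vertex set $V_1\cup V_2$ in which $X\in V_1$ and $Y\in V_2$ are adjacent if and only if $X\subseteq Y^\dagger$ or $Y^\dagger\subseteq X$, and there are no other edges. The vertex covering number is the minimum size of a set of vertices meeting every edge. *)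

From mathcomp Require Import all_boot all_order.
Set Implicit Arguments. Unset Strict Implicit. Unset Printing Implicit Defensive.

(* Encoding: the element (i, true) : 'I_n * bool stands for x_{i+1}, and
   (i, false) stands for -x_{i+1}.  Since 0 < x_1 < ... < x_n, the absolute
   value of (i, s) is x_{i+1}, encoded by the index i. *)


(* B_n = {±x_1, ..., ±x_{n-1}, x_n}: -x_n (index n-1, sign false) excluded. *)
Definition Bn (n : nat) : {set 'I_n * bool} :=
  [set a : 'I_n * bool | a.2 || (a.1.+1 != n)].

Definition Bnplus (n : nat) : {set 'I_n * bool} := [set a : 'I_n * bool | a.2].

Definition dagger (n : nat) (S : {set 'I_n * bool}) : {set 'I_n} :=
  [set a.1 | a in S].

Definition in_phiB (n : nat) (S : {set 'I_n * bool}) : bool :=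
  [&& S \subset Bn n, S != set0,
      [forall a in S, forall b in S, (a.1 == b.1) ==> (a == b)] &
      [forall a in S, [forall b in S, b.1 <= a.1] ==> a.2]].

Definition inV1 (n k : nat) (S : {set 'I_n * bool}) : bool :=
  (S \subset Bnplus n) && (#|S| == k).

Definition inV2 (n k : nat) (S : {set 'I_n * bool}) : bool :=
  in_phiB S && ~~ inV1 k S.

Definition HB_vertices (n k : nat) : {set {set 'I_n * bool}} :=
  [set S | inV1 k S || inV2 k S].

(* X in V1 and Y in V2 with X ⊆ Y^† or Y^† ⊆ X (X ⊆ B_n^+ so X^† is X). *)
Definition HB_adj1 (n k : nat) (X Y : {set 'I_n * bool}) : bool :=
  [&& inV1 k X, inV2 k Y &
      (dagger X \subset dagger Y) || (dagger Y \subset dagger X)].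

Definition HB_edge (n k : nat) : rel {set 'I_n * bool} :=
  fun X Y => HB_adj1 k X Y || HB_adj1 k Y X.

Definition is_vertex_cover (T : finType) (V : {set T}) (E : rel T)
  (C : {set T}) : bool :=
  (C \subset V) &&
  [forall x in V, forall y in V, E x y ==> (x \in C) || (y \in C)].

(* Minimum size of a vertex cover (V itself is always a cover). *)
Definition vertex_cover_number (T : finType) (V : {set T}) (E : rel T) : nat :=
  \big[minn/#|V|]_(C : {set T} | is_vertex_cover V E C) #|C|.

From mathcomp Require Import all_boot all_order.
Set Implicit Arguments. Unset Strict Implicit. Unset Printing Implicit Defensive.
Import Order.TTheory.

(* Every edge of H_B(n,k) has an endpoint in V1, so V1 is a cover of size
   C(n,k).  Conversely, V1 is matched into V2: to X in V1 add one index m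
   missing from X, signed + if m exceeds every index of X (so that it is the
   positive maximum) and - otherwise (the maximum of X stays positive).  The
   sign records which case occurred and X is recovered from its image, so the
   matching has |V1| edges and every cover contains one endpoint of each. *)

Section VertexCover.
Variables (T : finType) (V : {set T}) (E : rel T).

Lemma is_vertex_cover_full : is_vertex_cover V E V.
Proof.
rewrite /is_vertex_cover subxx; apply/forall_inP => x xV.
by apply/forall_inP => y _; rewrite xV implybT.
Qed.

Lemma vertex_cover_number_le (C : {set T}) :
  is_vertex_cover V E C -> vertex_cover_number V E <= #|C|.
Proof.
move=> coverC; rewrite /vertex_cover_number -minEnat.
exact: (bigmin_le_cond _ (fun C : {set T} => #|C|) coverC).
Qed.

Lemma vertex_cover_number_ge b :
  (forall C, is_vertex_cover V E C -> b <= #|C|) -> b <= vertex_cover_number V E.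
Proof.
move=> lbC; rewrite /vertex_cover_number -minEnat.
apply: (@le_bigmin _ _ _ _ (fun C : {set T} => #|C|)); last exact: lbC.
exact: lbC is_vertex_cover_full.
Qed.

Lemma matching_le_vertex_cover (C A : {set T}) (f : T -> T) :
    is_vertex_cover V E C -> A \subset V ->
    {in A, forall x, [/\ f x \in V, f x \notin A & E x (f x)]} ->
    {in A &, injective f} ->
  #|A| <= #|C|.
Proof.
case/andP=> _ /forall_inP coverC /subsetP AV fA f_inj.
pose h x := if x \in C then x else f x.
have hC : {in A, forall x, h x \in C}.
  move=> x xA; rewrite /h; case: ifP => // xNC.
  have [fxV _ Exfx] := fA x xA.
  by move: (coverC x (AV x xA)) => /forall_inP/(_ _ fxV); rewrite Exfx xNC.
have h_inj : {in A &, injective h}.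
  move=> x y xA yA; rewrite /h; case: ifP => _; case: ifP => _ //; last exact: f_inj.
  - by move=> xfy; have [_ /negP[]] := fA y yA; rewrite -xfy.
  - by move=> fxy; have [_ /negP[]] := fA x xA; rewrite fxy.
rewrite -(card_in_imset h_inj); apply/subset_leq_card/subsetP => _ /imsetP[x xA ->].
exact: hC.
Qed.

End VertexCover.

Section KneserB.
Variables (n k : nat).
Local Notation T := ('I_n * bool)%type.

Lemma card_Bnplus : #|Bnplus n| = n.
Proof.
have -> : Bnplus n = setX [set: 'I_n] [set true] by apply/setP => -[i []]; rewrite !inE.
by rewrite cardsX cardsT card_ord cards1 muln1.
Qed.

Definition V1 : {set {set T}} := [set X | inV1 k X].

Lemma card_V1 : #|V1| = 'C(n, k).
Proof. by rewrite -[X in 'C(X, _)]card_Bnplus -cards_draws. Qed.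

Lemma V1_sub_vertices : V1 \subset HB_vertices n k.
Proof. by apply/subsetP => X; rewrite !inE => ->. Qed.

Lemma V1_vertex_cover : is_vertex_cover (HB_vertices n k) (@HB_edge n k) V1.
Proof.
rewrite /is_vertex_cover V1_sub_vertices.
apply/forall_inP => X _; apply/forall_inP => Y _; apply/implyP.
by case/orP => /and3P[V1Z _ _]; rewrite !inE V1Z ?orbT.
Qed.

Lemma V1_elem (X : {set T}) a : inV1 k X -> a \in X -> a = (a.1, true).
Proof. by case/andP => /subsetP XB _ /XB; rewrite inE; case: a => i []. Qed.

Definition index_above (X : {set T}) (m : 'I_n) : bool := [forall a in X, a.1 < m].

Definition extend (X : {set T}) (m : 'I_n) : {set T} := (m, index_above X m) |: X.

Lemma extend_max (X : {set T}) m :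
  index_above X m -> {in extend X m, forall a : T, a.1 <= m}.
Proof.
move=> /forall_inP above a; rewrite !inE => /orP[/eqP -> // | aX].
exact/ltnW/above.
Qed.

Lemma extend_top_mem (X : {set T}) m : index_above X m -> (m, true) \in extend X m.
Proof. by move=> above; rewrite /extend above setU11. Qed.

Section Extension.
Variables (X : {set T}) (m : 'I_n).
Hypotheses (X_V1 : inV1 k X) (mNX : (m, true) \notin X).

Lemma V1_index_neq a : a \in X -> a.1 != m :> nat.
Proof.
move=> aX; apply: contraNneq mNX => /val_inj am.
by rewrite -am -(V1_elem X_V1 aX).
Qed.

Lemma index_notin s : (m, s) \notin X.
Proof. by apply/negP => /V1_index_neq; rewrite eqxx. Qed.

Lemma extend_phiB : in_phiB (extend X m).
Proof.
apply/and4P; split.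
- apply/subsetP => a; rewrite !inE => /orP[/eqP -> /= | aX]; last first.
    by rewrite (V1_elem X_V1 aX).
  case: (boolP (index_above X m)) => //= /forall_inPn[b bX].
  rewrite -leqNgt leq_eqVlt eq_sym (negPf (V1_index_neq bX)) /= => mb.
  by rewrite neq_ltn (leq_ltn_trans mb).
- by apply/set0Pn; exists (m, index_above X m); apply: setU11.
- apply/forall_inP => a aY; apply/forall_inP => b bY; apply/implyP => /eqP ab.
  move: aY bY; rewrite !inE => /orP[/eqP aE | aX] /orP[/eqP bE | bX].
  + by rewrite aE bE.
  + by move: (V1_index_neq bX); rewrite -ab aE eqxx.
  + by move: (V1_index_neq aX); rewrite ab bE eqxx.
  + by rewrite (V1_elem X_V1 aX) (V1_elem X_V1 bX) ab.
- apply/forall_inP => a; rewrite !inE => /orP[/eqP -> | aX]; apply/implyP; last first.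
    by rewrite (V1_elem X_V1 aX).
  move=> /forall_inP /= below; apply/forall_inP => b bX.
  have /= bm : b.1 <= m by apply: below; rewrite !inE bX orbT.
  by rewrite ltn_neqAle V1_index_neq.
Qed.

Lemma extend_V2 : inV2 k (extend X m).
Proof.
rewrite /inV2 extend_phiB /inV1 cardsU1 index_notin (eqP (andP X_V1).2).
by rewrite eqn_leq ltnn andbF.
Qed.

Lemma extend_edge : HB_edge k X (extend X m).
Proof. by rewrite /HB_edge /HB_adj1 X_V1 extend_V2 /dagger imsetS ?subsetUr. Qed.

Lemma extend_subset_Bnplus : (extend X m \subset Bnplus n) = index_above X m.
Proof. by rewrite subUset sub1set inE (andP X_V1).1 andbT. Qed.

Lemma extend_Bnplus : ~~ index_above X m -> extend X m :&: Bnplus n = X.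
Proof.
move=> /negPf below; apply/setP => a; rewrite !inE below.
case: eqP => [-> | _] /=; first exact/esym/negbTE/index_notin.
by apply: andb_idr => /(V1_elem X_V1) ->.
Qed.

Lemma extend_setD1 : index_above X m -> extend X m :\ (m, true) = X.
Proof. by move=> above; rewrite /extend above setU1K. Qed.

End Extension.

Lemma extend_inj (X1 X2 : {set T}) m1 m2 :
    inV1 k X1 -> inV1 k X2 -> (m1, true) \notin X1 -> (m2, true) \notin X2 ->
  extend X1 m1 = extend X2 m2 -> X1 = X2.
Proof.
move=> V1X1 V1X2 m1N m2N eqY.
have same_above : index_above X1 m1 = index_above X2 m2.
  by rewrite -(extend_subset_Bnplus _ V1X1) -(extend_subset_Bnplus _ V1X2) eqY.
case: (boolP (index_above X1 m1)) => above1; last first.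
  rewrite -(extend_Bnplus V1X1 m1N above1) eqY extend_Bnplus //.
  by rewrite -same_above.
have above2 : index_above X2 m2 by rewrite -same_above.
have le12 : m1 <= m2.
  by apply: (extend_max above2 (x := (m1, true))); rewrite -eqY extend_top_mem.
have le21 : m2 <= m1.
  by apply: (extend_max above1 (x := (m2, true))); rewrite eqY extend_top_mem.
have eq_m : m1 = m2 by apply/val_inj/eqP; rewrite eqn_leq le12 le21.
subst m2.
by rewrite -(extend_setD1 m1N above1) eqY extend_setD1.
Qed.

Definition V1_partner (X : {set T}) : {set T} :=
  if [pick m | (m, true) \notin X] is Some m then extend X m else X.

Lemma V1_partnerP (X : {set T}) :
  inV1 k X -> k < n -> exists2 m, (m, true) \notin X & V1_partner X = extend X m.
Proof.
move=> X_V1 ltkn; rewrite /V1_partner; case: pickP => [m mNX | full]; first by exists m.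
have : Bnplus n \subset X.
  apply/subsetP => -[i s]; rewrite inE /= => s_pos.
  by move: (full i); rewrite s_pos /= => /negbFE.
by move/subset_leq_card; rewrite card_Bnplus (eqP (andP X_V1).2) leqNgt ltkn.
Qed.

Lemma V1_partner_matching : k < n ->
  {in V1, forall X, [/\ V1_partner X \in HB_vertices n k, V1_partner X \notin V1
                      & HB_edge k X (V1_partner X)]}.
Proof.
move=> ltkn X; rewrite inE => X_V1; have [m mNX ->] := V1_partnerP X_V1 ltkn.
have /andP[_ NV1] := extend_V2 X_V1 mNX.
by rewrite !inE extend_V2 ?orbT ?extend_edge.
Qed.

Lemma V1_partner_inj : k < n -> {in V1 &, injective V1_partner}.
Proof.
move=> ltkn X1 X2; rewrite !inE => V1X1 V1X2.
have [m1 m1N ->] := V1_partnerP V1X1 ltkn; have [m2 m2N ->] := V1_partnerP V1X2 ltkn.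
exact: extend_inj.
Qed.

End KneserB.

Theorem mainTheorem3 (n k : nat) :
  2 <= n -> 1 <= k < n ->
  vertex_cover_number (HB_vertices n k) (@HB_edge n k) = 'C(n, k).
Proof.
move=> _ /andP[_ ltkn]; apply/eqP; rewrite eqn_leq -(card_V1 n k).
rewrite vertex_cover_number_le ?V1_vertex_cover //=.
apply: vertex_cover_number_ge => C coverC.
apply: (matching_le_vertex_cover coverC (V1_sub_vertices n k)).
- exact: V1_partner_matching.
- exact: V1_partner_inj.
Qed.
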